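(* There is a function $C(t,\epsilon)$ such that the following holds for every positive integer $t$ and every $\epsilon\in(0,1)$: let $G$ be a connected balanced bipartite graph with parts $X,Y$ each of order $n$, with $\delta(G)\geq 3C(t,\epsilon)$ and with no induced $S_{t,t}$. Then for any vertices $x,x'\in X\setminus U_X(\epsilon)$ we have $|N(x)\cap N(x')|\geq (1-10\epsilon)\Delta_X$.
   Context: For positive integers $a,b$, the biclaw $S_{a,b}$ is the graph with vertex set $\{x,x_1,\dots,x_a,y,y_1,\dots,y_b\}$ and edges $xy$, $xy_1,\dots,xy_b$, $yx_1,\dots,yx_a$; ''no induced $S_{t,t}$'' means no induced subgraph isomorphic to $S_{t,t}$. For a bipartite graph with parts $X,Y$, $\Delta_X=\max_{x\in X} d(x)$ and $U_X(\epsilon)=\{x\in X: d(x)\leq (1-\epsilon)\Delta_X\}$. $N(v)$ is the neighbourhood and $\delta(G)$ the minimum degree. *)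

From HB Require Import structures.
From mathcomp Require Import all_boot all_order all_algebra.
From mathcomp Require Import Rstruct.
From Stdlib Require Rdefinitions.
Notation R := Rdefinitions.R.
Set Implicit Arguments. Unset Strict Implicit. Unset Printing Implicit Defensive.
Import Order.TTheory GRing.Theory Num.Theory.
Local Open Scope ring_scope.

(* Vertex type of the biclaw S_{a,b}:
   inl (inl true)  = x,  inl (inl false) = y,
   inl (inr i)     = x_i (i < a),  inr j = y_j (j < b). *)
Definition biclaw_vert (a b : nat) : finType := ((bool + 'I_a) + 'I_b)%type.

Definition biclaw_adj (a b : nat) (u v : biclaw_vert a b) : bool :=
  match u, v with
  | inl (inl true), inl (inl false) => true
  | inl (inl false), inl (inl true) => true
  | inl (inl true), inr _ => true
  | inr _, inl (inl true) => true
  | inl (inl false), inl (inr _) => true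
  | inl (inr _), inl (inl false) => true
  | _, _ => false
  end.

Definition simple_graph (T : finType) (e : rel T) : Prop :=
  symmetric e /\ irreflexive e.

Definition has_induced_biclaw (T : finType) (e : rel T) (a b : nat) : Prop :=
  exists f : biclaw_vert a b -> T,
    injective f /\ forall u v, e (f u) (f v) = biclaw_adj u v.

Definition nbhd (T : finType) (e : rel T) (v : T) : {set T} := [set u | e v u].

Definition deg (T : finType) (e : rel T) (v : T) : nat := #|nbhd e v|.

Definition connected_graph (T : finType) (e : rel T) : Prop :=
  forall u v : T, connect e u v.

Definition bipartite_parts (T : finType) (e : rel T) (X : {set T}) : Prop :=
  forall u v, e u v -> (u \in X) != (v \in X).

Definition min_degree_ge (T : finType) (e : rel T) (d : R) : Prop :=
  forall v : T, (d <= (deg e v)%:R)%R.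

Definition DeltaX (T : finType) (e : rel T) (X : {set T}) : nat :=
  \max_(x in X) deg e x.

Definition U_X (T : finType) (e : rel T) (X : {set T}) (eps : R) : {set T} :=
  [set x in X | ((deg e x)%:R <= (1 - eps) * (DeltaX e X)%:R)%R].

From mathcomp Require Import all_boot all_order all_algebra.
From mathcomp Require Import Rstruct.
From Stdlib Require Rdefinitions.
From mathcomp Require Import lra zify.
Import Order.TTheory GRing.Theory Num.Theory.

Set Implicit Arguments.
Unset Strict Implicit.
Unset Printing Implicit Defensive.

(* For an edge uv, call a neighbour p of v (p <> u) K-atypical if N(p) misses at
   least a 1/K fraction of N(u).  Without an induced S_{t,t}, every edge has fewer
   than M = t (2K)^t atypical vertices: otherwise a greedy averaging argument picks
   t atypical vertices and t vertices of N(u) with no edges between them, which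
   together with u and v induce S_{t,t}.

   Fix x in X of degree above (1 - eps) Delta_X, call p close if N(p) misses fewer
   than d(x)/K vertices of N(x), and rich if p has more than M common neighbours
   with x.  A vertex with a rich neighbour has almost all its neighbours close,
   and having a rich neighbour propagates along paths of length two by a
   double-counting argument.  By connectivity, each neighbour w of x' in X then
   has a close neighbour p that is typical for the edge x'w, so N(p) contains all
   but a 1/K fraction of both N(x) and N(x').  As d(p) <= Delta_X while d(x) and
   d(x') exceed (1 - eps) Delta_X, x and x' have at least (1 - 4 eps) Delta_X
   common neighbours once K > 1/eps. *)

Section Counting.
Variable T : finType.
Implicit Types (A B : {set T}) (r : rel T).

Lemma card_sep_sum A (P : pred T) : #|[set a in A | P a]| = \sum_(a in A) P a.
Proof.
rewrite -sum1_card big_mkcond [RHS]big_mkcond /=.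
by apply: eq_bigr => a _; rewrite inE; case: (a \in A); case: (P a).
Qed.

Lemma double_count A B r :
  \sum_(a in A) #|[set b in B | r a b]| = \sum_(b in B) #|[set a in A | r a b]|.
Proof.
under eq_bigr do rewrite card_sep_sum.
under [RHS]eq_bigr do rewrite card_sep_sum.
exact: exchange_big.
Qed.

Lemma double_count_leq A B r m n k :
  (forall a, a \in A -> m <= k * #|[set b in B | r a b]|) ->
  (forall b, b \in B -> #|[set a in A | r a b]| <= n) ->
  #|A| * m <= k * (#|B| * n).
Proof.
move=> lbA ubB; apply: (@leq_trans (k * \sum_(a in A) #|[set b in B | r a b]|)).
  rewrite -sum1_card big_distrl big_distrr /=.
  by apply: leq_sum => a aA; rewrite mul1n lbA.
rewrite double_count leq_mul2l -sum1_card big_distrl /=; apply/orP; right.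
by apply: leq_sum => b bB; rewrite mul1n ubB.
Qed.

Lemma exists_ge_average A (F : T -> nat) : 0 < #|A| ->
  exists2 c, c \in A & \sum_(a in A) F a <= F c * #|A|.
Proof.
move=> A0; have [c cA maxE] := eq_bigmax_cond F A0; exists c => //; rewrite -maxE.
rewrite -sum1_card big_distrr /=; apply: leq_sum => a aA.
by rewrite muln1 leq_bigmax_cond.
Qed.

Lemma exists_notin_of_card_lt A B : #|B| < #|A| -> exists2 a, a \in A & a \notin B.
Proof.
move=> ltBA; apply/subsetPn; apply: contraTN ltBA => /subset_leq_card.
by rewrite -leqNgt.
Qed.

Lemma setD1D A B w : w \in B -> (A :\ w) :\: B = A :\: B.
Proof. by move=> wB; rewrite setDDl (setUidPr _) // sub1set. Qed.

Lemma card_common_lower A B P :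
  #|A| + #|B| <= #|A :&: B| + #|A :\: P| + #|B :\: P| + #|P|.
Proof.
have sub_P : (A :&: P) :|: (B :&: P) \subset P by rewrite subUset !subsetIr.
have sub_AB : (A :&: P) :&: (B :&: P) \subset A :&: B by rewrite setIACA subsetIl.
have := subset_leq_card sub_P; have := subset_leq_card sub_AB.
have := cardsID P A; have := cardsID P B; have := cardsUI (A :&: P) (B :&: P); lia.
Qed.

Lemma greedy_anticomplete r B Q k :
  (forall b, b \in B -> k <= #|Q :\: nbhd r b|) -> k <= #|Q| ->
  forall s, s <= k -> exists B' S : {set T},
    [/\ B' \subset B, S \subset Q, #|S| = s,
        (forall b c, b \in B' -> c \in S -> ~~ r b c)
      & #|B| * (k - s) ^ s <= #|B'| * #|Q| ^ s].
Proof.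
move=> farB kQ; elim=> [_|s IH ltsk].
  by exists B, set0; rewrite sub0set cards0; split=> // b c _; rewrite inE.
have [B' [S [sB'B sSQ cardS antiS ineq]]] := IH (ltnW ltsk).
pose A := Q :\: S.
have cardA : #|A| = #|Q| - s by rewrite cardsD (setIidPr sSQ) cardS.
have [c cA avg_c] : exists2 c, c \in A &
    \sum_(b in B') #|[set a in A | ~~ r b a]| <= #|[set b in B' | ~~ r b c]| * #|A|.
  rewrite double_count; apply: exists_ge_average; rewrite cardA; lia.
have far_in_A : #|B'| * (k - s) <= \sum_(b in B') #|[set a in A | ~~ r b a]|.
  rewrite -sum1_card big_distrl /=; apply: leq_sum => b bB'; rewrite mul1n.
  have sub : Q :\: nbhd r b \subset [set a in A | ~~ r b a] :|: S.
    apply/subsetP => a; rewrite !inE => /andP[nba aQ].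
    by case: (a \in S); rewrite ?orbT // nba aQ.
  have := subset_leq_card sub; have := farB b (subsetP sB'B b bB').
  rewrite cardsU cardS; lia.
move: cA; rewrite inE => /andP[cS cQ].
exists [set b in B' | ~~ r b c], (c |: S); split.
- by apply: subset_trans sB'B; apply/subsetP => b; rewrite inE => /andP[].
- by rewrite subUset sub1set cQ.
- by rewrite cardsU1 cS cardS.
- move=> b c'; rewrite !inE => /andP[bB' nbc] /orP[/eqP -> //|]; exact: antiS.
- have dec : (k - s.+1) ^ s.+1 <= (k - s) ^ s.+1 by rewrite leq_exp2r //; lia.
  apply: (leq_trans (leq_mul (leqnn _) dec)).
  rewrite !expnS mulnCA; apply: (leq_trans (leq_mul (leqnn _) ineq)).
  rewrite mulnCA [X in _ <= X]mulnCA [X in _ <= X]mulnA mulnA leq_mul //.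
  apply: leq_trans far_in_A (leq_trans avg_c _).
  by rewrite mulnC leq_mul // cardA leq_subr.
Qed.

End Counting.

Section BipartiteGraph.
Variables (T : finType) (e : rel T) (X : {set T}) (t : nat).
Hypotheses (e_sym : symmetric e) (e_irr : irreflexive e)
  (e_bip : bipartite_parts e X).
Local Notation N := (nbhd e).

Lemma in_nbhd u v : (v \in N u) = e u v.
Proof. by rewrite inE. Qed.

Lemma common_nbr_nonadj w a b : e w a -> e w b -> e a b = false.
Proof.
move=> /e_bip wa /e_bip wb; apply/negP => /e_bip.
by move: wa wb; case: (w \in X); case: (a \in X); case: (b \in X).
Qed.

Lemma card_nbhdD1 u v : e u v -> #|N u :\ v| = (deg e u).-1.
Proof. by move=> euv; rewrite /deg (cardsD1 v (N u)) in_nbhd euv. Qed.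

Lemma deg_le_DeltaX p : p \in X -> deg e p <= DeltaX e X.
Proof. exact: leq_bigmax_cond. Qed.

Lemma induced_biclaw_of_leaves u v (a b : 'I_t -> T) : e u v ->
  injective a -> injective b -> (forall i, a i \in N v :\ u) -> (forall j, b j \in N u :\ v) ->
  (forall i j, ~~ e (a i) (b j)) -> has_induced_biclaw e t t.
Proof.
move=> euv a_inj b_inj aNv bNu ab.
have va i : e v (a i) by have := aNv i; rewrite in_setD1 in_nbhd => /andP[].
have ub j : e u (b j) by have := bNu j; rewrite in_setD1 in_nbhd => /andP[].
have vu : e v u by rewrite e_sym.
have av i : e (a i) v by rewrite e_sym.
have bu j : e (b j) u by rewrite e_sym.
have ua i : e u (a i) = false by apply: common_nbr_nonadj (vu) (va i).
have au i : e (a i) u = false by rewrite e_sym.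
have vb j : e v (b j) = false by apply: common_nbr_nonadj (ub j).
have bv j : e (b j) v = false by rewrite e_sym.
have aa i i' : e (a i) (a i') = false by apply: common_nbr_nonadj (va i) (va i').
have bb j j' : e (b j) (b j') = false by apply: common_nbr_nonadj (ub j) (ub j').
have {}ab i j : e (a i) (b j) = false by apply/negbTE/ab.
have ba j i : e (b j) (a i) = false by rewrite e_sym.
pose f (z : biclaw_vert t t) : T :=
  match z with
  | inl (inl c) => if c then u else v
  | inl (inr i) => a i
  | inr j => b j
  end.
have f_adj z z' : e (f z) (f z') = biclaw_adj z z'.
  by case: z z' => [[[]|i]|j] [[[]|i']|j'] /=;
    rewrite ?e_irr ?euv ?vu ?va ?av ?ub ?bu ?ua ?au ?vb ?bv ?aa ?bb ?ab ?ba.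
exists f; split=> // z z' fzz'.
have adj y : biclaw_adj z y = biclaw_adj z' y by rewrite -!f_adj fzz'.
case: z z' fzz' adj => [[[]|i]|j] [[[]|i']|j'] //= fzz' adj.
all: try by rewrite (a_inj _ _ fzz').
all: try by rewrite (b_inj _ _ fzz').
all: first [ by have := adj (inl (inl true)) | by have := adj (inl (inl false))
           | by have := adj (inr i) | by have := adj (inr i')
           | by have := adj (inl (inr j)) | by have := adj (inl (inr j')) ].
Qed.

Lemma induced_biclaw_of_anticomplete u v (A B : {set T}) : e u v ->
  A \subset N v :\ u -> B \subset N u :\ v -> t <= #|A| -> t <= #|B| ->
  (forall a b, a \in A -> b \in B -> ~~ e a b) -> has_induced_biclaw e t t.
Proof.
move=> euv sAv sBu tA tB AB.
pose a i := enum_val (widen_ord tA i); pose b j := enum_val (widen_ord tB j).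
have aA i : a i \in A by apply: enum_valP.
have bB j : b j \in B by apply: enum_valP.
apply: (induced_biclaw_of_leaves (a := a) (b := b) euv).
- by move=> i j /enum_val_inj/(congr1 val)/=/val_inj.
- by move=> i j /enum_val_inj/(congr1 val)/=/val_inj.
- by move=> i; apply: (subsetP sAv).
- by move=> j; apply: (subsetP sBu).
- by move=> i j; apply: AB.
Qed.

Definition atypical K u v : {set T} :=
  [set p in N v :\ u | #|N u :\ v| <= K * #|N u :\: N p|].

Lemma typical_miss_lt K u v p : e u v -> p \in N v :\ u -> p \notin atypical K u v ->
  K * #|N u :\: N p| < (deg e u).-1.
Proof. by move=> euv pNv; rewrite inE pNv /= -ltnNge card_nbhdD1. Qed.

Hypothesis no_biclaw : ~ has_induced_biclaw e t t.

Lemma card_atypical_lt K u v : 0 < K -> 0 < t -> e u v ->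
  (2 * t + 1) * K <= #|N u :\ v| -> #|atypical K u v| < t * (2 * K) ^ t.
Proof.
move=> K0 t0 euv bigQ; set Q := N u :\ v; set q := #|Q|.
rewrite ltnNge; apply/negP => many.
pose k := q %/ K.
have far b : b \in atypical K u v -> k <= #|Q :\: N b|.
  rewrite inE in_setD1 in_nbhd => /andP[/andP[_ evb] /(leq_div2r K)].
  by rewrite mulKn // setD1D // in_nbhd e_sym.
have k2t : 2 * t + 1 <= k by rewrite leq_divRL.
have tk : t <= k by lia.
have [B [S [sB sSQ cardS antiBS ineq]]] := greedy_anticomplete far (leq_div q K) tk.
have q2K : q <= 2 * K * (k - t) by have := ltn_ceil q K0; nia.
have tB : t <= #|B|.
  have qt0 : 0 < q ^ t by rewrite expn_gt0; lia.
  rewrite -(leq_pmul2r qt0); apply: leq_trans ineq.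
  apply: (@leq_trans (t * ((2 * K) ^ t * (k - t) ^ t))).
    by rewrite -expnMn leq_mul2l leq_exp2r // q2K orbT.
  by rewrite mulnA leq_mul2r many orbT.
apply: no_biclaw; apply: induced_biclaw_of_anticomplete euv _ sSQ tB _ antiBS.
- by apply: subset_trans sB _; apply/subsetP => p; rewrite inE => /andP[].
- by rewrite cardS.
Qed.

End BipartiteGraph.

Section CloseToX.
Variables (T : finType) (e : rel T) (X : {set T}) (K M : nat) (x : T).
Hypotheses (e_sym : symmetric e) (e_bip : bipartite_parts e X).
Hypotheses (K_ge11 : 11 <= K) (xX : x \in X)
  (atypical_lt : forall u v, e u v -> #|atypical e K u v| < M)
  (deg_ge : forall v, (K + 4) * (M + 1) <= deg e v)
  (DeltaX_le : DeltaX e X <= 2 * deg e x).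
Local Notation N := (nbhd e).
Local Notation atypical := (atypical e).

Definition close : {set T} := [set p | K * #|N x :\: N p| < deg e x].
Definition rich : {set T} := [set c | M < #|N c :&: N x|].
Definition near_rich : {set T} := [set w | [exists c in rich, e w c]].

Let deg_gt1 v : 1 < deg e v.
Proof. by have := deg_ge v; nia. Qed.

Lemma close_x : x \in close.
Proof. by rewrite inE setDv cards0 muln0; have := deg_gt1 x; lia. Qed.

Lemma close_of_typical q p : e x q -> p \in N q :\ x -> p \notin atypical K x q ->
  p \in close.
Proof.
move=> exq pNq /(typical_miss_lt exq pNq) typ.
by rewrite inE; have := deg_gt1 x; lia.
Qed.

Lemma rich_of_close p : p \in close -> p \in rich.
Proof.
rewrite !inE => far; have := cardsID (N p) (N x); rewrite setIC -/(deg e x).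
by have := deg_ge x; nia.
Qed.

Lemma rich_in_X c : c \in rich -> c \in X.
Proof.
rewrite inE => /(leq_ltn_trans (leq0n M)) /card_gt0P[q].
rewrite !inE => /andP[ecq exq]; have := e_bip exq; have := e_bip ecq.
by rewrite xX; case: (c \in X); case: (q \in X).
Qed.

Lemma rich_of_close_typical p u p' : p \in close -> e p u ->
  p' \in N u :\ p -> p' \notin atypical K p u -> p' \in rich.
Proof.
move=> pC epu p'Nu /(typical_miss_lt epu p'Nu) typ.
have degp : deg e p <= 2 * deg e x.
  by apply: leq_trans DeltaX_le; rewrite deg_le_DeltaX ?rich_in_X ?rich_of_close.
have sub : N x :\: N p' \subset (N x :\: N p) :|: (N p :\: N p').
  by apply/subsetP => y; rewrite !inE => /andP[-> ->]; case: (e p y).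
have := leq_trans (subset_leq_card sub) (leq_card_setU _ _).
have := cardsID (N p') (N x); rewrite setIC -/(deg e x).
move: pC; rewrite !inE; have := deg_ge x; nia.
Qed.

Lemma card_nbhd_notin_close q : e x q -> #|N q :\: close| < M.
Proof.
move=> exq; apply: leq_ltn_trans (atypical_lt exq); apply: subset_leq_card.
apply/subsetP => p; rewrite inE => /andP[pC pNq]; apply: contraNT (pC) => ptyp.
apply: close_of_typical exq _ ptyp; rewrite in_setD1 pNq andbT.
by apply: contraNneq pC => ->; apply: close_x.
Qed.

Lemma card_nbhd_notin_close_rich c w : c \in rich -> e c w ->
  K * #|N w :\: close| < deg e w + K * M.
Proof.
move=> cR ecw; have ewc : e w c by rewrite e_sym.
have [q] : exists2 q, q \in (N c :&: N x) :\ w & q \notin atypical K w c.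
  apply: exists_notin_of_card_lt; apply: leq_trans (atypical_lt ewc) _.
  by move: cR; rewrite inE; have := cardsD1 w (N c :&: N x); lia.
rewrite in_setD1 in_setI !in_nbhd => /andP[qw /andP[ecq exq]] qtyp.
have qNcw : q \in N c :\ w by rewrite in_setD1 qw in_nbhd.
have typ := typical_miss_lt ewc qNcw qtyp.
have sub : N w :\: close \subset (N w :\: N q) :|: (N q :\: close).
  by apply/subsetP => y; rewrite !inE => /andP[-> ->]; case: (e q y).
have := leq_trans (subset_leq_card sub) (leq_card_setU _ _) => /(leq_mul (leqnn K)).
by have := leq_mul (leqnn K) (card_nbhd_notin_close exq); clear -typ; lia.
Qed.

Lemma exists_close_typical z a : z \in near_rich -> e a z ->
  exists p, [/\ p \in N z :\ a, p \in close & p \notin atypical K a z].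
Proof.
rewrite inE => /existsP[c /andP[cR ezc]] eaz.
have ecz : e c z by rewrite e_sym.
have few := card_nbhd_notin_close_rich cR ecz.
have [p] : exists2 p, p \in (N z :&: close) :\ a & p \notin atypical K a z.
  apply: exists_notin_of_card_lt; apply: leq_trans (atypical_lt eaz) _.
  have := cardsID close (N z); have := cardsD1 a (N z :&: close).
  by have := deg_ge z; rewrite -/(deg e z); nia.
by rewrite in_setD1 in_setI => /andP[pa /andP[pNz pC]] ptyp; exists p; rewrite in_setD1 pa.
Qed.

Lemma deg_le_common_nbrs a p p' :
  K * #|N a :\: N p| < (deg e a).-1 -> K * #|N a :\: N p'| < (deg e a).-1 ->
  deg e a <= K * #|[set u in N a :&: N p | e p' u]|.
Proof.
move=> ap ap'.
have sub : N a \subset [set u in N a :&: N p | e p' u] :|: (N a :\: N p') :|: (N a :\: N p).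
  by apply/subsetP => y; rewrite !inE; case: (e a y); case: (e p y); case: (e p' y).
have := leq_trans (subset_leq_card sub) (leq_trans (leq_card_setU _ _)
          (leq_add (leq_card_setU _ _) (leqnn _))).
by have := deg_gt1 a; rewrite -/(deg e a); nia.
Qed.

Lemma near_rich_closed z a w : z \in near_rich -> e z a -> e a w -> w \in near_rich.
Proof.
move=> zR eza eaw; apply: contraT => wR; have eaz : e a z by rewrite e_sym.
have [p [pNz pC /(typical_miss_lt eaz pNz) ap]] := exists_close_typical zR eaz.
set U := N a :&: N p; set A := (N w :\ a) :\: atypical K a w.
have few u : u \in U -> #|[set p' in A | e p' u]| <= M.
  rewrite in_setI !in_nbhd => /andP[_ epu].
  apply/ltnW/(leq_ltn_trans _ (atypical_lt epu))/subset_leq_card/subsetP => p'.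
  rewrite inE in_setD in_setD1 in_nbhd => /andP[/andP[_ /andP[_ ewp']] ep'u].
  have p'R : p' \notin rich.
    by apply: contra wR => p'R; rewrite inE; apply/existsP; exists p'; rewrite p'R.
  apply: contraNT (p'R) => p'typ; apply: rich_of_close_typical (pC) epu _ p'typ.
  rewrite in_setD1 in_nbhd e_sym ep'u andbT.
  by apply: contraNneq p'R => ->; apply: rich_of_close.
have many p' : p' \in A -> deg e a <= K * #|[set u in U | e p' u]|.
  rewrite in_setD => /andP[p'typ p'Nw].
  exact: deg_le_common_nbrs ap (typical_miss_lt eaw p'Nw p'typ).
have cardU : #|U| <= deg e a by apply/subset_leq_card/subsetIl.
have cardA : #|A| <= K * M.
  rewrite -(leq_pmul2r (ltnW (deg_gt1 a))); apply: leq_trans (double_count_leq many few) _.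
  by rewrite -mulnA leq_mul2l [M * _]mulnC leq_mul2r cardU !orbT.
have ewa : e w a by rewrite e_sym.
have := cardsID (atypical K a w) (N w :\ a); rewrite -/A card_nbhdD1 //.
have := subset_leq_card (subsetIr (N w :\ a) (atypical K a w)).
by have := atypical_lt eaw; have := deg_ge w; clear -cardA; lia.
Qed.

Definition covered : {pred T} :=
  [pred v | if v \in X then N v \subset near_rich else v \in near_rich].

Let coveredE v :
  (v \in covered) = (if v \in X then N v \subset near_rich else v \in near_rich).
Proof. by []. Qed.

Lemma covered_closed : closed e covered.
Proof.
move=> v y evy; rewrite !coveredE.
have nbhd_sub u u' : e u u' -> u' \in near_rich -> N u \subset near_rich.
  move=> euu' u'R; apply/subsetP => w; rewrite in_nbhd; apply: near_rich_closed u'R _.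
  by rewrite e_sym.
have := e_bip evy; case: (v \in X); case: (y \in X) => //= _; apply/idP/idP.
- by move/subsetP => sub; apply: sub; rewrite in_nbhd.
- exact: nbhd_sub.
- by apply: nbhd_sub; rewrite e_sym.
- by move/subsetP => sub; apply: sub; rewrite in_nbhd e_sym.
Qed.

Lemma nbhd_sub_near_rich x' : connected_graph e -> x' \in X -> N x' \subset near_rich.
Proof.
move=> conn x'X; have := closed_connect covered_closed (conn x x').
rewrite !coveredE xX x'X => <-; apply/subsetP => q; rewrite in_nbhd => exq.
by rewrite inE; apply/existsP; exists x; rewrite rich_of_close ?close_x // e_sym.
Qed.

Lemma exists_close_to_both x' : connected_graph e -> x' \in X ->
  exists2 p, p \in X & K * #|N x :\: N p| < deg e x /\ K * #|N x' :\: N p| < deg e x'.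
Proof.
move=> conn x'X; have /card_gt0P[w wNx'] : 0 < deg e x' by have := deg_gt1 x'; lia.
have wR := subsetP (nbhd_sub_near_rich conn x'X) w wNx'.
have ex'w : e x' w by rewrite -in_nbhd.
have [p [pNw pC ptyp]] := exists_close_typical wR ex'w.
exists p; first by apply/rich_in_X/rich_of_close.
split; first by move: pC; rewrite inE.
by have := typical_miss_lt ex'w pNw ptyp; lia.
Qed.

End CloseToX.

Definition degree_threshold (t K : nat) : nat :=
  (K + 4) * (t * (2 * K) ^ t + 1) + (2 * t + 1) * K + 1.

Lemma card_atypical_lt_threshold (T : finType) (e : rel T) (X : {set T}) (t K : nat) :
  symmetric e -> irreflexive e -> bipartite_parts e X -> ~ has_induced_biclaw e t t ->
  0 < t -> 0 < K -> (forall v, degree_threshold t K <= deg e v) ->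
  forall u v, e u v -> #|atypical e K u v| < t * (2 * K) ^ t.
Proof.
move=> e_sym e_irr e_bip no_biclaw t0 K0 deg_ge u v euv.
apply: (card_atypical_lt (K := K) e_sym e_irr e_bip no_biclaw K0 t0 euv).
by rewrite card_nbhdD1 //; have := deg_ge u; rewrite /degree_threshold; lia.
Qed.

Local Open Scope ring_scope.

(* [K > 1/eps] turns the [1/K] losses into [eps Delta_X]; [11 <= K] absorbs the
   constant-factor losses. *)
Definition K_of (eps : R) : nat := maxn 11 (Num.truncn eps^-1).+1.

Lemma K_of_eps_gt1 (eps : R) : 0 < eps -> 1 < (K_of eps)%:R * eps.
Proof.
move=> eps0; have : eps^-1 < (K_of eps)%:R.
  by apply: lt_le_trans (truncnS_gt _) _; rewrite ler_nat leq_max ltnSn orbT.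
by move=> h; rewrite -(ltr_pM2r eps0) mulVf ?gt_eqF in h.
Qed.

Lemma deg_ge_of_min_degree (T : finType) (e : rel T) (d : nat) :
  min_degree_ge e (3 * d%:R) -> forall v, (d <= deg e v)%N.
Proof.
move=> mindeg v; have := mindeg v; rewrite -natrM ler_nat.
by apply: leq_trans; rewrite leq_pmull.
Qed.

Lemma notin_U_X (T : finType) (e : rel T) (X : {set T}) (eps : R) x :
  x \in X :\: U_X e X eps -> x \in X /\ (1 - eps) * (DeltaX e X)%:R < (deg e x)%:R.
Proof. by case/setDP => xX; rewrite /U_X inE xX /= -ltNge. Qed.

Lemma le_double_of_heavy (eps : R) (D d : nat) :
  10 * eps < 1 -> (1 - eps) * D%:R < d%:R -> (D <= 2 * d)%N.
Proof.
rewrite -(ler_nat R) natrM => eps_small heavy.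
have := ler0n R D; have := ler0n R d; nra.
Qed.

Lemma common_nbhd_arith (eps : R) (K D a b dp I r1 r2 : nat) :
  0 < eps -> 1 < K%:R * eps ->
  (1 - eps) * D%:R < a%:R -> (1 - eps) * D%:R < b%:R -> (a <= D)%N -> (b <= D)%N ->
  (dp <= D)%N -> (a + b <= I + r1 + r2 + dp)%N -> (K * r1 < a)%N -> (K * r2 < b)%N ->
  (1 - 4 * eps) * D%:R <= I%:R.
Proof.
move=> eps0 Keps ha hb; rewrite -!(ltr_nat R) -!(ler_nat R) !natrD !natrM.
move=> aD bD dpD count r1a r2b.
have small (r s : R) : 0 <= r -> K%:R * r < s -> s <= D%:R -> r <= eps * D%:R by nra.
have := small _ _ (ler0n R r1) r1a aD; have := small _ _ (ler0n R r2) r2b bD; lra.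
Qed.

Theorem mainTheorem13 :
  exists C : nat -> R -> R,
  forall (t : nat) (eps : R), (0 < t)%N -> (0 < eps)%R -> (eps < 1)%R ->
  forall (T : finType) (e : rel T) (X : {set T}) (n : nat),
    simple_graph e ->
    bipartite_parts e X ->
    #|X| = n -> #|~: X| = n ->
    connected_graph e ->
    min_degree_ge e (3 * C t eps)%R ->
    ~ has_induced_biclaw e t t ->
    forall x x' : T, x \in X :\: U_X e X eps -> x' \in X :\: U_X e X eps ->
      ((1 - 10 * eps) * (DeltaX e X)%:R <= #|nbhd e x :&: nbhd e x'|%:R)%R.
Proof.
exists (fun t eps => (degree_threshold t (K_of eps))%:R).
move=> t eps t0 eps0 _ T e X n [e_sym e_irr] e_bip _ _ conn mindeg no_biclaw x x' xU x'U.
have [|eps_small] := lerP (1 - 10 * eps) 0.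
  by move=> neg; apply: le_trans (mulr_le0_ge0 neg (ler0n _ _)) (ler0n _ _).
rewrite subr_gt0 in eps_small.
have [xX x_heavy] := notin_U_X xU; have [x'X x'_heavy] := notin_U_X x'U.
have deg_ge := deg_ge_of_min_degree mindeg.
set K := K_of eps in deg_ge *; have K_ge11 : (11 <= K)%N := leq_maxl _ _.
have K_gt0 : (0 < K)%N by apply: leq_trans K_ge11.
have atypical_lt := card_atypical_lt_threshold e_sym e_irr e_bip no_biclaw t0 K_gt0 deg_ge.
have deg_large v : ((K + 4) * (t * (2 * K) ^ t + 1) <= deg e v)%N.
  by have := deg_ge v; rewrite /degree_threshold; lia.
have [p pX [x_p x'_p]] := exists_close_to_both e_sym e_bip K_ge11 xX atypical_lt deg_large
  (le_double_of_heavy eps_small x_heavy) conn x'X.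
apply: le_trans (_ : (1 - 4 * eps) * (DeltaX e X)%:R <= _).
  by rewrite ler_wpM2r ?ler0n // lerD2l lerN2 ler_pM2r //; lra.
apply: common_nbhd_arith eps0 (K_of_eps_gt1 eps0) x_heavy x'_heavy _ _ _
  (card_common_lower _ _ (nbhd e p)) x_p x'_p.
all: by apply: deg_le_DeltaX.
Qed.
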